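(* Let $x\in\mathbb{R}^n$ be fixed, and for $j\in\{1,\dots,N\}$ let \[ h_j(u)=\gamma_j(x)+u^2+r_jq_ju(u+2\beta(x)),\qquad u\in\mathbb{R}, \] where $r_j\ge0$ are constants, $\gamma_j(x)\ge0$, $\beta(x)\in\mathbb{R}$, and $q_1<q_2<\dots<q_N$ are numbers in $[0,1]$. Let $h=[h_1,\dots,h_N]'$ and $U(x)=\{u\in\mathbb{R}:u(u+2\beta(x))\le0\}$. Then $U(x)$ is compact and \[ \inf_{u\in\mathbb{R}}\sup_{p\in\mathcal{S}_{N-1}}p'h(u)=\inf_{u\in U(x)}\sup_{p\in\mathcal{S}_{N-1}}p'h(u),\qquad \sup_{p\in\mathcal{S}_{N-1}}\inf_{u\in\mathbb{R}}p'h(u)=\sup_{p\in\mathcal{S}_{N-1}}\inf_{u\in U(x)}p'h(u). \] Moreover, let $a_\circ\in\{1,\dots,N\}$, $a_\circ\ne1$, and suppose $r_j=r>0$ and $\gamma_j(x)=\gamma(x)$ for all $j\ne a_\circ$. Then for any $j,k\in\{1,\dots,N\}\setminus\{a_\circ\}$ with $j<k$, $h_j(u)>h_k(u)$ for all $u$ in the interior of $U(x)$.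
   Context: $\mathcal{S}_{N-1}=\{p\in\mathbb{R}^N:p_j\ge0,\sum_jp_j=1\}$ is the unit simplex. *)

From HB Require Import structures.
From mathcomp Require Import all_boot all_order all_algebra.
From mathcomp Require Import all_classical all_reals all_analysis.
Set Implicit Arguments. Unset Strict Implicit. Unset Printing Implicit Defensive.
Import Order.TTheory GRing.Theory Num.Theory numFieldNormedType.Exports.
Local Open Scope ring_scope.
Local Open Scope classical_set_scope.

Definition simplex (R : realType) (N : nat) : set ('I_N -> R) :=
  [set p | (forall j, 0 <= p j) /\ \sum_(j < N) p j = 1].

Definition hfun (R : realType) (n N : nat) (gamma : 'I_N -> 'rV[R]_n -> R)
  (r q : 'I_N -> R) (beta : 'rV[R]_n -> R) (x : 'rV[R]_n) (j : 'I_N) (u : R) : R :=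
  gamma j x + u ^+ 2 + r j * q j * u * (u + 2 * beta x).

Definition pdot (R : realType) (N : nat) (p : 'I_N -> R) (hu : 'I_N -> R) : R :=
  \sum_(j < N) p j * hu j.

Definition Uset (R : realType) (n : nat) (beta : 'rV[R]_n -> R) (x : 'rV[R]_n) : set R :=
  [set u | u * (u + 2 * beta x) <= 0].

From HB Require Import structures.
From mathcomp Require Import all_boot all_order all_algebra.
From mathcomp Require Import all_classical all_reals all_analysis.
From mathcomp Require Import ring lra.
Set Implicit Arguments. Unset Strict Implicit. Unset Printing Implicit Defensive.
Import Order.TTheory GRing.Theory Num.Theory numFieldNormedType.Exports.
Local Open Scope ring_scope.
Local Open Scope classical_set_scope.

(* Each [h_j] is [gamma_j + u^2 + r_j q_j g(u)] with [g(u) = u (u + 2 beta)]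
   and [r_j q_j >= 0]. Outside [U = {g <= 0}] every [h_j] is at least its
   value at [0 \in U], so replacing [u] by [0] never increases [p'h(u)] for
   any [p] in the simplex; hence both optimisations over [u] may be restricted
   to [U], which is a segment with endpoints [0] and [-2 beta]. On the
   interior of [U] we have [g < 0], so for equal [r_j] and [gamma_j] the
   difference [h_k - h_j = r (q_k - q_j) g(u)] is negative when [j < k]. *)

Lemma ereal_inf_image_dominated (R : realType) (T : Type) (F : T -> \bar R)
    (A B : set T) :
  B `<=` A -> (forall u, A u -> exists2 v, B v & (F v <= F u)%E) ->
  ereal_inf (F @` A) = ereal_inf (F @` B).
Proof.
move=> BA domF; apply/eqP; rewrite eq_le; apply/andP; split.
  by apply: le_ereal_inf => _ [u Bu <-]; exists u => //; apply: BA.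
apply/ereal_infP => _ [u Au <-]; have [v Bv Fvu] := domF u Au.
by apply: le_trans Fvu; apply: ereal_inf_lbound; exists v.
Qed.

Lemma le_ereal_sup_image (R : realType) (T : Type) (F G : T -> \bar R)
    (A : set T) :
  (forall p, A p -> (F p <= G p)%E) ->
  (ereal_sup (F @` A) <= ereal_sup (G @` A))%E.
Proof.
move=> FG; apply: ub_ereal_sup => _ [p Ap <-].
by apply: le_trans (FG p Ap) _; apply: ereal_sup_ubound; exists p.
Qed.

Section QuadraticSign.
Variable R : realFieldType.
Implicit Types c u : R.

Lemma mulr_addr_le0_itv c u :
  (u * (u + c) <= 0) = (u \in `[Num.min 0 (- c), Num.max 0 (- c)]%R).
Proof.
rewrite in_itv /=; have [c0|c0] := leP 0 c.
  have nc0 : - c <= 0 by rewrite oppr_le0.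
  by rewrite (min_r nc0) (max_l nc0); apply/idP/andP => [?|[]]; first split; nra.
have nc0 : 0 <= - c by rewrite oppr_ge0 ltW.
by rewrite (min_l nc0) (max_r nc0); apply/idP/andP => [?|[]]; first split; nra.
Qed.

Lemma mulr_addr_lt0_itv c u :
  (u * (u + c) < 0) = (u \in `]Num.min 0 (- c), Num.max 0 (- c)[%R).
Proof.
rewrite in_itv /=; have [c0|c0] := leP 0 c.
  have nc0 : - c <= 0 by rewrite oppr_le0.
  by rewrite (min_r nc0) (max_l nc0); apply/idP/andP => [?|[]]; first split; nra.
have nc0 : 0 <= - c by rewrite oppr_ge0 ltW.
by rewrite (min_l nc0) (max_r nc0); apply/idP/andP => [?|[]]; first split; nra.
Qed.

End QuadraticSign.

Section Uset.
Variables (R : realType) (n : nat) (beta : 'rV[R]_n -> R) (x : 'rV[R]_n).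

Lemma Uset_itv :
  Uset beta x = `[Num.min 0 (- (2 * beta x)), Num.max 0 (- (2 * beta x))].
Proof. by apply/seteqP; split => u; rewrite /Uset /= mulr_addr_le0_itv. Qed.

Lemma compact_Uset : compact (Uset beta x).
Proof. by rewrite Uset_itv; apply: segment_compact. Qed.

Lemma interior_Uset :
  interior (Uset beta x) = [set u | u * (u + 2 * beta x) < 0].
Proof.
rewrite Uset_itv interior_itv_bnd.
by apply/seteqP; split => u; rewrite /= mulr_addr_lt0_itv.
Qed.

End Uset.

Lemma ler_pdot (R : realType) (N : nat) (p a b : 'I_N -> R) :
  (forall j, 0 <= p j) -> (forall j, a j <= b j) -> pdot p a <= pdot p b.
Proof. by move=> p0 ab; apply: ler_sum => j _; apply: ler_wpM2l. Qed.

Section Hfun.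
Variables (R : realType) (n N : nat) (x : 'rV[R]_n).
Variables (gamma : 'I_N -> 'rV[R]_n -> R) (r q : 'I_N -> R).
Variable beta : 'rV[R]_n -> R.
Local Notation h := (hfun gamma r q beta x).

Lemma hfun_ge_at0 j u : 0 <= r j * q j -> ~ Uset beta x u -> h j 0 <= h j u.
Proof. by rewrite /hfun /Uset /= => rq0 /negP; rewrite -ltNge => ?; nra. Qed.

Lemma hfun_subr j k u :
  r j = r k -> gamma j x = gamma k x ->
  h k u - h j u = r k * (q k - q j) * (u * (u + 2 * beta x)).
Proof. by rewrite /hfun => -> ->; ring. Qed.

Lemma hfun_lt_interior j k u :
  r j = r k -> gamma j x = gamma k x -> 0 < r k -> q j < q k ->
  interior (Uset beta x) u -> h k u < h j u.
Proof.
move=> rjk gjk rk0 qjk; rewrite interior_Uset /= => gu.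
by rewrite -subr_lt0 hfun_subr // pmulr_rlt0 // mulr_gt0 // subr_gt0.
Qed.

Lemma Uset_dominates u : (forall j, 0 <= r j * q j) ->
  exists2 v, Uset beta x v &
    forall p, simplex p -> pdot p (h ^~ v) <= pdot p (h ^~ u).
Proof.
move=> rq0; have [Uu|nUu] := pselect (Uset beta x u); first by exists u.
exists 0; first by rewrite /Uset /= mul0r.
by move=> p [p0 _]; apply: ler_pdot => // j; apply: hfun_ge_at0.
Qed.

End Hfun.

Theorem lemma2 (R : realType) (n N : nat) (x : 'rV[R]_n)
  (gamma : 'I_N -> 'rV[R]_n -> R) (r q : 'I_N -> R) (beta : 'rV[R]_n -> R)
  (hr : forall j, 0 <= r j) (hgamma : forall j, 0 <= gamma j x)
  (hq01 : forall j, 0 <= q j <= 1)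
  (hqinc : forall j k : 'I_N, (j < k)%N -> q j < q k) :
  let h := hfun gamma r q beta x in
  let U := Uset beta x in
  [/\ compact U,
    ereal_inf [set ereal_sup [set (pdot p (h ^~ u))%:E | p in @simplex R N] | u in [set: R]]
    = ereal_inf [set ereal_sup [set (pdot p (h ^~ u))%:E | p in @simplex R N] | u in U],
    ereal_sup [set ereal_inf [set (pdot p (h ^~ u))%:E | u in [set: R]] | p in @simplex R N]
    = ereal_sup [set ereal_inf [set (pdot p (h ^~ u))%:E | u in U] | p in @simplex R N]
  & forall (a0 : 'I_N), (val a0 != 0)%N ->
    forall (r0 g0 : R), 0 < r0 ->
    (forall j, j != a0 -> r j = r0 /\ gamma j x = g0) ->
    forall j k : 'I_N, j != a0 -> k != a0 -> (j < k)%N ->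
    forall u : R, interior U u -> h k u < h j u].
Proof.
move=> h U.
have rq0 j : 0 <= r j * q j by rewrite mulr_ge0 //; case/andP: (hq01 j).
have dom (u : R) := Uset_dominates x gamma beta u rq0.
split.
- exact: compact_Uset.
- apply: ereal_inf_image_dominated => // u _; have [v Uv hvu] := dom u.
  by exists v => //; apply: le_ereal_sup_image => p Sp; rewrite lee_fin hvu.
- congr ereal_sup; apply: eq_imagel => p Sp.
  apply: ereal_inf_image_dominated => // u _; have [v Uv hvu] := dom u.
  by exists v; rewrite ?lee_fin ?hvu.
- move=> a0 _ r0 g0 r0_gt0 rg j k ja ka jk u.
  have [rj gj] := rg j ja; have [rk gk] := rg k ka.
  by apply: hfun_lt_interior; rewrite ?rj ?gj ?rk ?gk ?hqinc.
Qed.
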